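(* Let $X$ be a real Banach space, $Y$ a (closed linear) subspace of $X$, $F=\{x_1,\dots,x_N\}$ a finite subset of $X$, $f:[0,\infty)^N\to[0,\infty)$ a monotone function, and $\varepsilon>0$. Then: (a) $\mathrm{rad}_Y^f(F)=\inf\{r_f(y,F): y\in\bigcup_{i=1}^N B[x_i,\mathrm{rad}_Y(F)+\varepsilon]\cap Y\}=\inf\{r_f(y,F): y\in Y,\ \|y\|\le\max_{1\le i\le N}\|x_i\|+\mathrm{rad}_Y(F)+\varepsilon\}$; (b) if $f$ is weakly strictly monotone, then $\mathrm{Cent}_Y^f(F)\subseteq\bigcup_{i=1}^N B[x_i,\mathrm{rad}_Y(F)+\varepsilon]\cap Y$; (c) if $f$ is weakly strictly monotone, then $\mathrm{Cent}_Y^f(F)\subseteq\bigcap_{i=1}^N B[x_i,\mathrm{rad}_Y(F)+\mathrm{diam}(F)+\varepsilon]\cap Y$.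
   Context: $B[x,r]$ is the closed ball with center $x$ and radius $r$. $f$ is monotone if $a\le b$ coordinatewise implies $f(a)\le f(b)$, weakly strictly monotone if monotone and $a_i<b_i$ for all $i$ implies $f(a)<f(b)$. $r_f(x,F)=f(\|x-x_1\|,\dots,\|x-x_N\|)$, $\mathrm{rad}_Y^f(F)=\inf_{y\in Y}r_f(y,F)$, $\mathrm{Cent}_Y^f(F)=\{y\in Y:r_f(y,F)=\mathrm{rad}_Y^f(F)\}$, and $\mathrm{rad}_Y(F)=\inf_{y\in Y}\max_{1\le i\le N}\|y-x_i\|$ is the restricted Chebyshev radius. *)

From HB Require Import structures.
From mathcomp Require Import all_boot all_order all_algebra.
From mathcomp Require Import all_classical all_reals all_analysis.
Set Implicit Arguments. Unset Strict Implicit. Unset Printing Implicit Defensive.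
Import Order.TTheory GRing.Theory Num.Theory.
Import numFieldNormedType.Exports.
Local Open Scope classical_set_scope.
Local Open Scope ring_scope.

Section Defs.
Variables (R : realType) (X : normedModType R) (N : nat).

Definition closed_subspace (Y : set X) : Prop :=
  [/\ Y 0, (forall u v, Y u -> Y v -> Y (u + v)),
      (forall (a : R) u, Y u -> Y (a *: u)) & closed Y].

Definition cball_of (x : X) (r : R) : set X := [set z | `|z - x| <= r].

Definition nonneg_vec (a : 'I_N -> R) : Prop := forall i, 0 <= a i.

Definition nonneg_fun (f : ('I_N -> R) -> R) : Prop :=
  forall a, nonneg_vec a -> 0 <= f a.

Definition monotone_fun (f : ('I_N -> R) -> R) : Prop :=
  forall a b, nonneg_vec a -> nonneg_vec b ->
    (forall i, a i <= b i) -> f a <= f b.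

Definition weakly_strictly_monotone (f : ('I_N -> R) -> R) : Prop :=
  monotone_fun f /\
  forall a b, nonneg_vec a -> nonneg_vec b ->
    (forall i, a i < b i) -> f a < f b.

Variables (f : ('I_N -> R) -> R) (x : 'I_N -> X).

Definition rf (y : X) : R := f (fun i => `|y - x i|).

Definition radf (Y : set X) : R := inf [set rf y | y in Y].

Definition centf (Y : set X) : set X := [set y | Y y /\ rf y = radf Y].

Definition cheb_rad (Y : set X) : R :=
  inf [set \big[Num.max/0]_(i < N) `|y - x i| | y in Y].

Definition diamF : R := \big[Num.max/0]_(i < N) \big[Num.max/0]_(j < N) `|x i - x j|.

End Defs.

From HB Require Import structures.
From mathcomp Require Import all_boot all_order all_algebra.
From mathcomp Require Import all_classical all_reals all_analysis.
Set Implicit Arguments. Unset Strict Implicit. Unset Printing Implicit Defensive.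
Import Order.TTheory GRing.Theory Num.Theory.
Import numFieldNormedType.Exports.
Local Open Scope classical_set_scope.
Local Open Scope ring_scope.

(* Pick y0 in Y whose distance to every x_i is below rad_Y(F) + eps.  A point
   y of Y outside the union of the balls B[x_i, rad_Y(F) + eps] is farther than
   y0 from every x_i, so by monotonicity r_f(y0, F) <= r_f(y, F), and strictly
   so when f is weakly strictly monotone.  Hence the infimum defining
   rad_Y^f(F) may be taken over any set squeezed between that union (intersected
   with Y) and Y, and no f-center lies outside the union.  Finally a point
   within rad_Y(F) + eps of some x_i is within rad_Y(F) + diam(F) + eps of
   every x_j by the triangle inequality. *)

Section InfImage.
Variables (R : realType) (T : Type) (g : T -> R).

Lemma inf_image_dominated (A B : set T) :
  A `<=` B -> A !=set0 -> has_lbound (g @` B) ->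
  (forall b, B b -> exists2 a, A a & g a <= g b) ->
  inf (g @` A) = inf (g @` B).
Proof.
move=> AB [a0 Aa0] lbB domB; apply/eqP; rewrite eq_le; apply/andP; split.
- apply: lb_le_inf; first by exists (g a0), a0 => //; exact: AB.
  move=> _ [b Bb <-]; have [a Aa gab] := domB b Bb.
  apply: le_trans gab; apply: ge_inf; last by exists a.
  by have [m lbm] := lbB; exists m => _ [a' Aa' <-]; apply: lbm; exists a' => //; exact: AB.
- apply: lb_le_inf; first by exists (g a0), a0.
  by move=> _ [a Aa <-]; apply: ge_inf => //; exists a => //; exact: AB.
Qed.

End InfImage.

Section Proposition.
Variables (R : realType) (X : normedModType R) (N : nat).
Variables (x : 'I_N -> X) (f : ('I_N -> R) -> R).

Definition cball_cover (r : R) : set X := \bigcup_(i in [set: 'I_N]) cball_of (x i) r.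

Lemma dist_nonneg_vec (y : X) : nonneg_vec (fun i => `|y - x i|).
Proof. by move=> i. Qed.

Lemma rf_has_lbound (A : set X) : nonneg_fun f -> has_lbound [set rf f x y | y in A].
Proof. by move=> f0; exists 0 => _ [y _ <-]; exact/f0/dist_nonneg_vec. Qed.

Lemma cheb_rad_approx (Y : set X) (eps : R) : Y !=set0 -> 0 < eps ->
  exists2 y0, Y y0 & forall i, `|y0 - x i| < cheb_rad x Y + eps.
Proof.
move=> [y Yy] eps_gt0.
have [_ [y0 Yy0 <-] y0_lt] : exists2 v,
    [set \big[Num.max/0]_(i < N) `|y - x i| | y in Y] v & v < cheb_rad x Y + eps.
  by apply: inf_lt; [exists (\big[Num.max/0]_(i < N) `|y - x i|), y | rewrite ltrDl].
exists y0 => // i; apply: le_lt_trans y0_lt.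
exact: (le_bigmax _ (fun i => `|y0 - x i|)).
Qed.

Lemma dist_lt_outside_cball_cover (r : R) (y0 y : X) :
  (forall i, `|y0 - x i| < r) -> ~ cball_cover r y -> forall i, `|y0 - x i| < `|y - x i|.
Proof.
move=> y0_lt y_out i; apply: lt_le_trans (y0_lt i) _.
by rewrite leNgt; apply/negP => y_lt; apply: y_out; exists i => //; exact: ltW.
Qed.

Lemma cball_cover_norm (r : R) (y : X) :
  cball_cover r y -> `|y| <= \big[Num.max/0]_(i < N) `|x i| + r.
Proof.
move=> [i _ yi]; have -> : y = x i + (y - x i) by rewrite addrC subrK.
apply: le_trans (ler_normD _ _) _; apply: lerD => //.
exact: (le_bigmax _ (fun i => `|x i|)).
Qed.

Lemma cball_cover_sub_bigcap (r : R) :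
  cball_cover r `<=` \bigcap_(j in [set: 'I_N]) cball_of (x j) (r + diamF x).
Proof.
move=> y [i _ yi] j _; rewrite /cball_of /=.
have -> : y - x j = (y - x i) + (x i - x j) by rewrite addrA subrK.
apply: le_trans (ler_normD _ _) _; apply: lerD => //.
apply: le_trans (_ : \big[Num.max/0]_(k < N) `|x i - x k| <= _).
  exact: (le_bigmax _ (fun k => `|x i - x k|)).
exact: (le_bigmax _ (fun l => \big[Num.max/0]_(k < N) `|x l - x k|)).
Qed.

Variables (Y : set X) (eps : R).
Hypotheses (N_gt0 : (0 < N)%N) (Y_neq0 : Y !=set0) (eps_gt0 : 0 < eps).

Let S := cball_cover (cheb_rad x Y + eps) `&` Y.

Lemma radf_eq_inf_between (B : set X) : nonneg_fun f -> monotone_fun f ->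
  S `<=` B -> B `<=` Y -> radf f x Y = inf [set rf f x y | y in B].
Proof.
move=> f0 fmono SB BY; have [y0 Yy0 y0_lt] := cheb_rad_approx Y_neq0 eps_gt0.
have Sy0 : S y0 by split=> //; exists (Ordinal N_gt0) => //; exact: ltW.
symmetry; apply: inf_image_dominated => //; first by exists y0; exact: SB.
  exact: rf_has_lbound.
move=> y Yy; have [Sy | Sy] := pselect (S y); first by exists y; first exact: SB.
exists y0; first exact: SB.
apply: fmono; try exact: dist_nonneg_vec.
by move=> i; apply: ltW; apply: (dist_lt_outside_cball_cover y0_lt) => Cy; apply: Sy.
Qed.

Lemma centf_sub_cball_cover : nonneg_fun f -> weakly_strictly_monotone f ->
  centf f x Y `<=` S.
Proof.
move=> f0 [_ fsmono] y [Yy rfy]; apply: contrapT => Sy.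
have [y0 Yy0 y0_lt] := cheb_rad_approx Y_neq0 eps_gt0.
have y0_better : rf f x y0 < rf f x y.
  apply: fsmono; try exact: dist_nonneg_vec.
  by apply: (dist_lt_outside_cball_cover y0_lt) => Cy; apply: Sy.
have : radf f x Y <= rf f x y0 by apply: ge_inf; [exact: rf_has_lbound | exists y0].
by rewrite -rfy leNgt y0_better.
Qed.

End Proposition.

Theorem proposition4p2 (R : realType) (X : completeNormedModType R) (N : nat)
    (Y : set X) (x : 'I_N -> X) (f : ('I_N -> R) -> R) (eps : R) :
  (0 < N)%N -> closed_subspace Y -> nonneg_fun f -> monotone_fun f -> 0 < eps ->
  (* (a) *)
  (radf f x Y =
     inf [set rf f x y | y in (\bigcup_(i in [set: 'I_N]) cball_of (x i) (cheb_rad x Y + eps)) `&` Y]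
   /\ radf f x Y =
     inf [set rf f x y | y in [set y | Y y /\
            `|y| <= \big[Num.max/0]_(i < N) `|x i| + cheb_rad x Y + eps]]) /\
  (weakly_strictly_monotone f ->
     (* (b) *)
     centf f x Y `<=` (\bigcup_(i in [set: 'I_N]) cball_of (x i) (cheb_rad x Y + eps)) `&` Y
     (* (c) *)
  /\ centf f x Y `<=` (\bigcap_(i in [set: 'I_N]) cball_of (x i) (cheb_rad x Y + diamF x + eps)) `&` Y).
Proof.
move=> N_gt0 [Y0 _ _ _] f0 fmono eps_gt0.
have Y_neq0 : Y !=set0 by exists 0.
have radf_eq := radf_eq_inf_between (x := x) N_gt0 Y_neq0 eps_gt0 f0 fmono.
split; first split.
- by apply: radf_eq => // y [].
- apply: radf_eq => [y [Cy Yy] | y []//]; split=> //.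
  by rewrite -addrA; exact: cball_cover_norm.
move=> fsmono; have centS := centf_sub_cball_cover (x := x) Y_neq0 eps_gt0 f0 fsmono.
split=> // y /centS [Cy Yy]; split=> //.
by rewrite addrAC; exact: cball_cover_sub_bigcap.
Qed.
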